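(* Fix $p\in(0,1)$ and suppose that for each $t\in\mathbb N$ the graph $G_t$ is (marginally) a directed Erdős–Rényi random graph $G(n,p)$ on $n$ vertices, with no assumption on the joint distribution of $(G_t)_{t\in\mathbb N}$. Let $\mathcal A$ be any allcast algorithm (which may depend on the whole sequence $(G_t)$) and let $T^{\rm all}(\mathcal A)$ be the random number of rounds until all nodes hold all packets. Then for every $q\in(p,1)$, $$\mathbb P\Bigl(T^{\rm all}(\mathcal A)\le \tfrac1q\Bigr)\le \tfrac1q\, e^{-n(n-1)H(q;p)},$$ where $H(q;p)=q\log\frac qp+(1-q)\log\frac{1-q}{1-p}$.
   Context: Allcast model: each of the $n$ nodes initially holds one distinct packet. Time is divided into rounds $t=1,2,\ldots$. In each round every node broadcasts exactly one packet, which must be a packet it currently holds (its own or one received earlier); a broadcast by $u$ in round $t$ is received by $v$ iff $(u,v)\in E_t$, where $G_t=(V,E_t)$. A directed Erdős–Rényi random graph $G(n,p)$ has each of the $n(n-1)$ ordered pairs $(u,v)$, $u\ne v$, present as an edge independently with probability $p$. $H(q;p)$ is the Kullback–Leibler divergence of $\mathrm{Bern}(q)$ from $\mathrm{Bern}(p)$. *)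

From HB Require Import structures.
From mathcomp Require Import all_boot all_order all_algebra.
From mathcomp Require Import all_classical all_reals all_analysis.
Set Implicit Arguments. Unset Strict Implicit. Unset Printing Implicit Defensive.
Import Order.TTheory GRing.Theory Num.Theory.
Local Open Scope ring_scope.
Local Open Scope classical_set_scope.

(* A directed graph on the node set 'I_n: its set of ordered pairs (u,v), i.e. edges u -> v. *)
Definition graph (n : nat) := {set 'I_n * 'I_n}.

Definition loopless (n : nat) (g : graph n) : bool := [forall u : 'I_n, (u, u) \notin g].

(* An allcast algorithm: given the whole sequence of graphs (G_t)_t, it prescribes for
   each round t and node u the packet broadcast by u in round t.  Packets are identified
   with the node that initially holds them. *)
Definition algorithm (n : nat) := (nat -> graph n) -> nat -> 'I_n -> 'I_n.

(* Packets held by v after t rounds (rounds are numbered 1,2,...). *)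
Fixpoint holds (n : nat) (A : algorithm n) (Gs : nat -> graph n) (t : nat) (v : 'I_n)
  : {set 'I_n} :=
  match t with
  | 0 => [set v]
  | t'.+1 => holds A Gs t' v :|: [set A Gs t u | u in [set u : 'I_n | (u, v) \in Gs t]]%SET
  end.

Definition valid_algorithm (n : nat) (A : algorithm n) : Prop :=
  forall (Gs : nat -> graph n) (t : nat) (u : 'I_n), A Gs t.+1 u \in holds A Gs t u.

Definition allcast_done (n : nat) (A : algorithm n) (Gs : nat -> graph n) (k : nat) : bool :=
  [forall v : 'I_n, holds A Gs k v == [set: 'I_n]%SET].

Definition KL {R : realType} (q p : R) : R :=
  q * ln (q / p) + (1 - q) * ln ((1 - q) / (1 - p)).

(* The random graph G : Omega -> graph n has the law of the directed Erdos-Renyi G(n,p):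
   each of the n(n-1) ordered pairs u<>v is an edge independently with probability p. *)
Definition ER_distributed {R : realType} {d : measure_display} {Omega : measurableType d}
  (P : probability Omega R) (n : nat) (p : R) (G : Omega -> graph n) : Prop :=
  forall g : graph n,
    P [set w | G w = g] =
    (if loopless g then p ^+ #|g| * (1 - p) ^+ (n * (n - 1) - #|g|)%N else 0)%:E.

From HB Require Import structures.
From mathcomp Require Import all_boot all_order all_algebra.
From mathcomp Require Import all_classical all_reals all_analysis.
From mathcomp Require Import zify ring lra.
Import Order.TTheory GRing.Theory Num.Theory.
Set Implicit Arguments. Unset Strict Implicit. Unset Printing Implicit Defensive.

(* Write N = n(n-1).  The argument has a combinatorial and a probabilistic half.
   - Counting: in each round node v receives at most indeg(v) new packets, so if
     allcast finishes after k rounds the graphs G_1,...,G_k together have at least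
     N edges; by pigeonhole one of them has at least N/k edges.  When k <= 1/q this
     round is "heavy": it has at least qN edges.
   - Chernoff: for a single G(n,p) graph, P(|G| >= qN) <= exp(-N H(q;p)), proved by
     the exponential-moment bound and the binomial theorem over loopless graphs.
   Hence the event {T_all <= 1/q} is contained in the union of the events
   "round t+1 is heavy" for t < floor(1/q), and a union bound gives the factor 1/q.
   No property of the joint law of (G_t) is used, and neither is the validity of
   the algorithm: the counting bound holds for any broadcast schedule. *)

Definition indeg (n : nat) (g : graph n) (v : 'I_n) : nat := \sum_(u : 'I_n) ((u, v) \in g).

Lemma sum_indeg n (g : graph n) : \sum_v indeg g v = #|g|.
Proof.
rewrite /indeg exchange_big /= pair_bigA /= -sum1_card [RHS]big_mkcond /=.
by apply: eq_bigr => -[u v] _; case: ((u, v) \in g).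
Qed.

(* In each round a node learns at most one packet per incoming edge. *)
Lemma card_holds_le n (A : algorithm n) Gs k v :
  (#|holds A Gs k v| <= 1 + \sum_(t < k) indeg (Gs t.+1) v)%N.
Proof.
elim: k => [|k IH] /=; first by rewrite cards1 big_ord0.
rewrite big_ord_recr /= addnA.
apply: (leq_trans (leq_card_setU _ _)); rewrite leq_add //.
apply: (leq_trans (leq_imset_card _ _)).
rewrite /indeg -sum1dep_card big_mkcond /=; apply: eq_leq.
by apply: eq_bigr => u _; case: ((u, v) \in Gs k.+1).
Qed.

(* Completing allcast in k rounds requires at least n(n-1) edges in rounds 1..k:
   each node must learn n - 1 packets. *)
Lemma allcast_done_edges n (A : algorithm n) Gs k :
  allcast_done A Gs k -> (n * (n - 1) <= \sum_(t < k) #|Gs t.+1|)%N.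
Proof.
move=> /forallP done.
have learn v : (n <= 1 + \sum_(t < k) indeg (Gs t.+1) v)%N.
  by have := card_holds_le A Gs k v; rewrite (eqP (done v)) cardsT card_ord.
have : (\sum_(v < n) n <= \sum_(v < n) (1 + \sum_(t < k) indeg (Gs t.+1) v))%N.
  by apply: leq_sum => v _; exact: learn.
rewrite big_split /= exchange_big /=.
under [X in (_ <= _ + X)%N]eq_bigr => t _ do rewrite sum_indeg.
rewrite !sum_nat_const card_ord /=.
set E := (\sum_(t < k) _)%N; nia.
Qed.

Lemma exists_ge_average (k N : nat) (a : nat -> nat) :
  (0 < N)%N -> (N <= \sum_(t < k) a t)%N -> exists t : 'I_k, (N <= k * a t)%N.
Proof.
move=> N_gt0 N_le.
have k_gt0 : (0 < #|'I_k|)%N.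
  by case: k N_le => [|k]; rewrite ?big_ord0 ?card_ord //; lia.
have [t0 max_t0] := @bigop.eq_bigmax _ (fun t : 'I_k => a t) k_gt0.
exists t0; rewrite -max_t0; apply: (leq_trans N_le).
have -> : (k * \max_(t < k) a t = \sum_(t < k) \max_(t < k) a t)%N.
  by rewrite sum_nat_const card_ord.
by apply: leq_sum => t _; exact: (@bigop.leq_bigmax _ (fun t : 'I_k => a t)).
Qed.

Definition offdiag (n : nat) : {set 'I_n * 'I_n} := [set e | e.1 != e.2]%SET.

Lemma card_offdiag n : #|offdiag n| = (n * (n - 1))%N.
Proof.
have offdiagE : offdiag n = (~: [set (u, u) | u : 'I_n])%SET.
  apply/setP => -[u v]; rewrite !inE /=; apply/idP/idP.
  - by move=> uv; apply/imsetP => -[w _ [eu ev]]; move: uv; rewrite eu ev eqxx.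
  - by move=> /imsetP diag; apply/negP => /eqP uv; apply: diag; exists u; rewrite ?uv.
have card_diag : #|[set (u, u) | u : 'I_n]%SET| = n.
  by rewrite card_imset ?card_ord // => a b [].
have := cardsC [set (u, u) | u : 'I_n]%SET.
rewrite -offdiagE card_diag card_prod card_ord mulnBr muln1.
set m := #|offdiag n|; lia.
Qed.

Lemma looplessE n (g : graph n) : loopless g = (g \subset offdiag n).
Proof.
apply/forallP/fintype.subsetP => [noloop [u v] uv_g | sub u].
- by rewrite inE /=; apply/eqP => eq_uv; move: (noloop u); rewrite {2}eq_uv uv_g.
- by apply/negP => /sub; rewrite inE /= eqxx.
Qed.

Local Open Scope ring_scope.

Lemma sum_loopless_binomial (R : comNzRingType) n (y z : R) :
  \sum_(g : graph n | loopless g) y ^+ #|g| * z ^+ (n * (n - 1) - #|g|)%N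
  = (y + z) ^+ (n * (n - 1))%N.
Proof.
set D := offdiag n.
pose F (e : 'I_n * 'I_n) := if e \in D then y else 0.
pose H (e : 'I_n * 'I_n) := if e \in D then z else 1.
have expand := @bigA_distr R 0 1 *%R +%R _ F H.
have prodE : \prod_e (F e + H e) = (y + z) ^+ (n * (n - 1))%N.
  rewrite -card_offdiag -prodr_const [RHS]big_mkcond /=.
  by apply: eq_bigr => e _; rewrite /F /H; case: (e \in D); rewrite ?add0r.
rewrite -prodE expand [RHS](bigID (fun J : {set _} => J \subset D)) /=.
rewrite [X in _ + X]big1 ?addr0; last first.
  by move=> J /fintype.subsetPn [e eJ eD]; rewrite (bigD1 e) //= eJ /F (negbTE eD) mul0r.
apply: eq_big => [g|J]; first by rewrite looplessE.
rewrite looplessE => JD; rewrite (bigID (mem J)) /=; congr (_ * _).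
  rewrite -(prodr_const (mem J)); apply: eq_big => // e eJ.
  by rewrite eJ /F (fintype.subsetP JD e eJ).
have card_rest : #|D :\: J| = (n * (n - 1) - #|J|)%N.
  by rewrite cardsD (finset.setIidPr JD) card_offdiag.
rewrite -card_rest -prodr_const [RHS]big_mkcond [LHS]big_mkcond /=.
by apply: eq_bigr => e _; rewrite /H !inE; case: (e \in J); case: (e \in D).
Qed.

Definition heavy (R : realType) (n : nat) (q : R) (g : graph n) : bool :=
  q * (n * (n - 1))%N%:R <= #|g|%:R.

(* With the optimal tilting parameter s = ln(q(1-p) / (p(1-q))), the Chernoff bound
   e^{-sqN} (p e^s + 1 - p)^N equals e^{-N H(q;p)}. *)
Lemma chernoff_optimum (R : realType) (p q : R) (N : nat) : 0 < p < 1 -> p < q < 1 ->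
  expR (- (ln (q * (1 - p) / (p * (1 - q))) * q * N%:R)) * ((1 - p) / (1 - q)) ^+ N
  = expR (- N%:R * KL q p).
Proof.
move=> /andP[p_gt0 p_lt1] /andP[pq q_lt1].
have q_gt0 : 0 < q by lra.
have qp_gt0 : 0 < q / p by apply: divr_gt0.
have r_gt0 : 0 < (1 - p) / (1 - q) by apply: divr_gt0; lra.
have -> : q * (1 - p) / (p * (1 - q)) = (q / p) * ((1 - p) / (1 - q)) by field; lra.
rewrite lnM ?posrE // -{2}(lnK (r_gt0 : _ \in Num.pos)) -expRM_natl -expRD.
congr expR; rewrite /KL -[(1 - q) / (1 - p)]invf_div lnV ?posrE //; ring.
Qed.

Lemma ER_upper_tail (R : realType) n (p q : R) : 0 < p < 1 -> p < q < 1 ->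
  \sum_(g : graph n | loopless g && heavy q g)
     p ^+ #|g| * (1 - p) ^+ (n * (n - 1) - #|g|)%N
  <= expR (- (n * (n - 1))%N%:R * KL q p).
Proof.
move=> hp hq; have /andP[p_gt0 p_lt1] := hp; have /andP[pq q_lt1] := hq.
set N := (n * (n - 1))%N.
set x := q * (1 - p) / (p * (1 - q)).
have x_ge1 : 1 <= x.
  by rewrite /x ler_pdivlMr ?mul1r; [nra | apply: mulr_gt0; lra].
set s := ln x; have s_ge0 : 0 <= s by apply: ln_ge0.
set c := expR (- (s * q * N%:R)).
have weight_ge0 (g : graph n) : 0 <= (p * x) ^+ #|g| * (1 - p) ^+ (N - #|g|).
  by apply: mulr_ge0; apply: exprn_ge0; [apply: mulr_ge0|]; lra.
(* Markov's inequality for the exponential moment e^{s |g|}, term by term. *)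
have markov (g : graph n) : heavy q g ->
    p ^+ #|g| * (1 - p) ^+ (N - #|g|) <= c * ((p * x) ^+ #|g| * (1 - p) ^+ (N - #|g|)).
  move=> g_heavy.
  have -> : c * ((p * x) ^+ #|g| * (1 - p) ^+ (N - #|g|))
     = (p ^+ #|g| * (1 - p) ^+ (N - #|g|)) * expR (#|g|%:R * s - s * q * N%:R).
    by rewrite expRD expRM_natl /s lnK ?posrE ?exprMn /c; [ring | lra].
  rewrite -{1}[p ^+ #|g| * _]mulr1 ler_wpM2l //.
    by apply: mulr_ge0; apply: exprn_ge0; lra.
  by rewrite -[X in X <= _]expR0 ler_expR subr_ge0 [_ * s]mulrC -mulrA ler_wpM2l.
apply: (@le_trans _ _ (\sum_(g : graph n | loopless g)
                        c * ((p * x) ^+ #|g| * (1 - p) ^+ (N - #|g|)))).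
  rewrite [X in X <= _]big_mkcondr /=; apply: ler_sum => g _.
  by case: ifP => [/markov //|_]; apply: mulr_ge0; [exact: expR_ge0 | exact: weight_ge0].
rewrite -mulr_sumr sum_loopless_binomial.
have -> : p * x + (1 - p) = (1 - p) / (1 - q) by rewrite /x; field; lra.
by rewrite /c /s /x chernoff_optimum.
Qed.

Local Open Scope classical_set_scope.

Section FinitePreimage.
Variables (R : realType) (d : measure_display) (Omega : measurableType d).
Variables (P : probability Omega R) (T : finType) (X : Omega -> T).
Hypothesis X_measurable : forall x, measurable [set w | X w = x].

Lemma measure_preimage_seq (s : seq T) :
  measurable [set w | X w \in s] /\
  (P [set w | X w \in s] <= \sum_(x <- s) P [set w | X w = x])%E.
Proof.
elim: s => [|a s [s_meas IH]].
  have -> : [set w | X w \in [::]] = set0 by apply/seteqP; split.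
  by rewrite measure0 big_nil.
have -> : [set w | X w \in a :: s] = [set w | X w = a] `|` [set w | X w \in s].
  apply/seteqP; split => w /=; rewrite in_cons; first by case/orP => [/eqP|]; [left|right].
  by case => [->|->]; rewrite ?eqxx ?orbT.
split; first exact: measurableU.
by rewrite big_cons; apply: (le_trans (measureU2 _ _ _)) => //; apply: leeD.
Qed.

Lemma measure_preimage_pred (S : pred T) :
  measurable [set w | S (X w)] /\
  (P [set w | S (X w)] <= \sum_(x | S x) P [set w | X w = x])%E.
Proof.
have -> : [set w | S (X w)] = [set w | X w \in enum S].
  by apply/seteqP; split => w /=; rewrite mem_enum.
by rewrite -big_enum; exact: measure_preimage_seq.
Qed.

End FinitePreimage.

Lemma early_allcast_heavy_round (R : realType) n (A : algorithm n) Gs k (q : R) :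
  0 < q -> (0 < n * (n - 1))%N -> k%:R <= q^-1 -> allcast_done A Gs k ->
  exists t : 'I_k, heavy q (Gs t.+1).
Proof.
move=> q_gt0 N_gt0 k_le done.
have [t kt] := @exists_ge_average k _ (fun t => #|Gs t.+1|) N_gt0 (allcast_done_edges done).
exists t; rewrite /heavy.
have qk_le1 : q * k%:R <= 1 by have := ler_wpM2l (ltW q_gt0) k_le; rewrite mulfV ?gt_eqF.
have : (n * (n - 1))%N%:R <= k%:R * #|Gs t.+1|%:R :> R by rewrite -natrM ler_nat.
have : 0 <= #|Gs t.+1|%:R :> R by [].
nra.
Qed.

Lemma ER_heavy_probability (R : realType) (d : measure_display) (Omega : measurableType d)
  (P : probability Omega R) n (p q : R) (G : Omega -> graph n) :
  0 < p < 1 -> p < q < 1 ->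
  (forall g, measurable [set w | G w = g]) -> ER_distributed P p G ->
  measurable [set w | heavy q (G w)] /\
  (P [set w | heavy q (G w)] <= (expR (- (n * (n - 1))%N%:R * KL q p))%:E)%E.
Proof.
move=> hp hq G_meas ER.
have [heavy_meas heavy_le] := measure_preimage_pred P G_meas (heavy q).
split => //; apply: (le_trans heavy_le).
under eq_bigr => g _ do rewrite ER.
rewrite sumEFin lee_fin -big_mkcondr /=.
rewrite (eq_bigl (fun g => loopless g && heavy q g)) => [|g]; last exact: andbC.
exact: ER_upper_tail.
Qed.

Theorem corollary1 (R : realType) (d : measure_display) (Omega : measurableType d)
  (P : probability Omega R) (n : nat) (p : R) (G : nat -> Omega -> graph n)
  (A : algorithm n) (q : R) :
  0 < p < 1 ->
  (forall (t : nat) (g : graph n), measurable [set w | G t w = g]) ->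
  (forall t : nat, ER_distributed P p (G t)) ->
  valid_algorithm A ->
  (forall k : nat, measurable [set w | allcast_done A (fun t => G t w) k]) ->
  p < q < 1 ->
  (P [set w | exists k : nat, (k%:R <= q^-1)%R /\ allcast_done A (fun t => G t w) k]
    <= (q^-1 * expR (- (n * (n - 1))%:R * KL q p))%:E)%E.
Proof.
move=> hp G_meas ER _ done_meas hq.
have q_gt0 : 0 < q by lra.
have qinv_ge1 : 1 <= q^-1 by rewrite invf_ge1; lra.
set c := expR _; set S := [set w | _].
have S_meas : measurable S.
  have -> : S = \bigcup_(k in [set k : nat | k%:R <= q^-1])
                  [set w | allcast_done A (fun t => G t w) k].
    by apply/seteqP; split => w /= [k]; [case=> hk hd | move=> hk hd]; exists k.
  by apply: bigcup_measurable => k _; exact: done_meas.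
have [N0|N_gt0] := posnP (n * (n - 1)).
  by apply: (le_trans (probability_le1 P S_meas)); rewrite /c N0 mulr0n oppr0 mul0r expR0 mulr1 lee_fin.
set K := Num.truncn q^-1.
pose E t := [set w | heavy q (G t.+1 w)].
have E_meas t : measurable (E t) by case: (ER_heavy_probability hp hq (G_meas t.+1) (ER t.+1)).
have S_sub : S `<=` \big[setU/set0]_(t < K) E t.
  move=> w [k [k_le done]]; rewrite -bigcup_mkord.
  have [t heavy_t] := early_allcast_heavy_round q_gt0 N_gt0 k_le done.
  exists t => //=; rewrite truncn_ge_nat; last by lra.
  by apply: le_trans k_le; rewrite ler_nat.
apply: (le_trans (content_subadditive P (fun t _ => E_meas t) S_meas S_sub)).
apply: (@le_trans _ _ (\sum_(t < K) c%:E)%E).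
  by apply: lee_sum => t _; case: (ER_heavy_probability hp hq (G_meas t.+1) (ER t.+1)).
rewrite (sumEFin _ _ (fun=> c)) lee_fin sumr_const card_ord -mulr_natl.
by apply: ler_wpM2r; [exact: expR_ge0 | rewrite truncn_le; lra].
Qed.
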